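(* Let $\alpha:[r]\to[m]$, $\alpha':[r']\to[m]$ be increasing and $\beta:[r]\to[n]$, $\beta':[r']\to[n]$ injective. If there exist $L\in L_m(P_m)$ and $R\in L_n(P_n)$ with $L\,\Pi(\alpha,\beta)=\Pi(\alpha',\beta')\,R$, then $\Pi(\alpha,\beta)=\Pi(\alpha',\beta')$.
   Context: $\mathbb{F}$ is the field with two elements, $[n]=\{1,\dots,n\}$, $e_{n,i}$ standard basis column vectors, $I_n$ identity. $P_n=\{(i,j):i,j\in[n],i>j\}$ and $L_n(P_n)=I_n+\mathrm{span}\{e_{n,i}e_{n,j}^{\top}:i>j\}$ is the group of lower unitriangular matrices. $\Pi(\alpha,\beta)=\sum_{i=1}^re_{m,\alpha(i)}e_{n,\beta(i)}^{\top}\in\mathbb{F}^{m\times n}$ (an incomplete permutation matrix). *)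

From HB Require Import structures.
From mathcomp Require Import all_boot all_order all_algebra.
Set Implicit Arguments. Unset Strict Implicit. Unset Printing Implicit Defensive.
Import GRing.Theory.
Local Open Scope ring_scope.

Notation F2 := 'F_2.

Definition Pi (m n r : nat) (alpha : 'I_r -> 'I_m) (beta : 'I_r -> 'I_n)
  : 'M[F2]_(m, n) := \sum_(i < r) delta_mx (alpha i) (beta i).

(* Membership in L_n(P_n) = I_n + span{ e_i e_j^T : i > j } *)
Definition lower_unitri (n : nat) (L : 'M[F2]_n) : Prop :=
  exists c : 'I_n -> 'I_n -> F2,
    L = 1%:M + \sum_(i < n) \sum_(j < n | (j < i)%N) c i j *: delta_mx i j.

Definition increasing (r m : nat) (f : 'I_r -> 'I_m) : Prop :=
  forall i j : 'I_r, (i < j)%N -> (f i < f j)%N.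

From mathcomp Require Import all_boot all_order all_algebra.
Set Implicit Arguments. Unset Strict Implicit. Unset Printing Implicit Defensive.
Import GRing.Theory.
Local Open Scope ring_scope.

(* Let L P = P' U with L, U lower unitriangular and P, P' partial permutation
   matrices. Work down the rows. If row a of L is the unit row, row a of P equals
   row a of P' U, which is 0 or the row b of U where P' has its 1 in row a; as
   U b b = 1 and P has at most one 1 per row, row a of P equals row a of P'. To
   move on to row a + 1, replace column a of L and column b of U by unit columns:
   both sides of the equation change by the same rank-one matrix, because column
   b of L P is column a of L and column b of P' U is P' times column b of U. *)

Section PartialPermutationMatrices.

Variable R : nzRingType.

Definition unitrig_mx n (A : 'M[R]_n) : Prop := is_trig_mx A /\ forall i, A i i = 1.

Definition unit_rows m n (P : 'M[R]_(m, n)) : Prop :=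
  forall i, row i P = 0 \/ exists j, row i P = delta_mx 0 j.

Definition partial_perm_mx m n (P : 'M[R]_(m, n)) : Prop :=
  unit_rows P /\ unit_rows P^T.

Definition set_unit_col n (A : 'M[R]_n) (j : 'I_n) : 'M[R]_n :=
  \matrix_(x, c) if c == j then (x == j)%:R else A x c.

Lemma unit_rows_row m n (P : 'M[R]_(m, n)) i j :
  unit_rows P -> P i j = 1 -> row i P = delta_mx 0 j.
Proof.
move=> /(_ i) row_i Pij; have Pij' : row i P 0 j = 1 by rewrite mxE.
case: row_i Pij' => [-> | [j' ->]]; rewrite !mxE ?eqxx.
  by move/esym/eqP; rewrite oner_eq0.
by case: eqP => [-> //|_] /esym/eqP; rewrite oner_eq0.
Qed.

Lemma partial_perm_col m n (P : 'M[R]_(m, n)) i j :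
  partial_perm_mx P -> P i j = 1 -> col j P = delta_mx i 0.
Proof.
move=> [_ PTrows] Pij; apply: trmx_inj.
by rewrite tr_col trmx_delta (@unit_rows_row _ _ _ j i) // mxE.
Qed.

Lemma set_unit_colE n (A : 'M[R]_n) j :
  set_unit_col A j = A + (delta_mx j 0 - col j A) *m delta_mx 0 j.
Proof.
apply/matrixP => x c; rewrite !mxE big_ord1 !mxE eqxx andbT eq_sym.
by case: eqP => [-> | _]; rewrite ?mulr1 ?mulr0 ?addr0 // addrC subrK.
Qed.

Lemma mul_set_unit_col m n (A : 'M[R]_m) (B : 'M[R]_(m, n)) j :
  set_unit_col A j *m B = A *m B + (delta_mx j 0 - col j A) *m row j B.
Proof. by rewrite set_unit_colE (mulmxDl A) -mulmxA -rowE. Qed.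

Lemma unitrig_set_unit_col n (A : 'M[R]_n) j :
  unitrig_mx A -> unitrig_mx (set_unit_col A j).
Proof.
move=> [/is_trig_mxP Atrig Adiag]; split => [|x]; last first.
  by rewrite mxE; case: eqP.
apply/is_trig_mxP => x c lt_xc; rewrite mxE.
case: eqP => [<- | _]; last exact: Atrig.
by case: eqP lt_xc => [-> | //]; rewrite ltnn.
Qed.

Lemma row_unitrig_id_cols n (A : 'M[R]_n) (a : 'I_n) :
  unitrig_mx A -> (forall x c : 'I_n, (c < a)%N -> A x c = (x == c)%:R) ->
  row a A = delta_mx 0 a.
Proof.
move=> [/is_trig_mxP Atrig Adiag] Aid; apply/rowP => c; rewrite !mxE eqxx /=.
case: (ltngtP c a) => [lt_ca | lt_ac | /val_inj ->]; last by rewrite Adiag eqxx.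
- by rewrite Aid // eq_sym.
- by rewrite Atrig // -val_eqE (gtn_eqF lt_ac).
Qed.

Section ReductionStep.

Variables (m n : nat) (P P' : 'M[R]_(m, n)) (L : 'M[R]_m) (U : 'M[R]_n).
Variable a : 'I_m.
Hypotheses (PP : partial_perm_mx P) (PP' : partial_perm_mx P').
Hypotheses (trigU : unitrig_mx U) (La : row a L = delta_mx 0 a).
Hypothesis LP_P'U : L *m P = P' *m U.

Let row_aE : row a P = row a P' *m U.
Proof. by rewrite -row_mul -LP_P'U row_mul La -rowE. Qed.

Lemma row_eq_at_unit_row : row a P = row a P'.
Proof.
case: (PP'.1 a) => [P'a0 | [b0 P'ab0]]; first by rewrite row_aE P'a0 mul0mx.
have /[!mxE] Pab0 : row a P 0 b0 = 1.
  by rewrite row_aE P'ab0 -rowE mxE trigU.2.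
by rewrite P'ab0 (unit_rows_row PP.1 Pab0).
Qed.

Lemma exists_reduced_mul :
  exists U', unitrig_mx U' /\ set_unit_col L a *m P = P' *m U'.
Proof.
rewrite mul_set_unit_col.
case: (PP.1 a) => [-> | [b0 Pab0]]; first by exists U; rewrite mulmx0 addr0.
exists (set_unit_col U b0); split; first exact: unitrig_set_unit_col.
have /[!mxE] P_ab0 : row a P 0 b0 = 1 by rewrite Pab0 mxE !eqxx.
have /[!mxE] P'_ab0 : row a P' 0 b0 = 1.
  by rewrite -row_eq_at_unit_row Pab0 mxE !eqxx.
have colL : col a L = P' *m col b0 U.
  by rewrite colE -(partial_perm_col PP P_ab0) colE mulmxA LP_P'U -mulmxA -colE.
rewrite set_unit_colE mulmxDr LP_P'U Pab0 mulmxA mulmxBr -colE.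
by rewrite (partial_perm_col PP' P'_ab0) colL.
Qed.

End ReductionStep.

Section Uniqueness.

Variables (m n : nat) (P P' : 'M[R]_(m, n)) (L0 : 'M[R]_m) (U0 : 'M[R]_n).
Hypotheses (PP : partial_perm_mx P) (PP' : partial_perm_mx P').
Hypotheses (trigL0 : unitrig_mx L0) (trigU0 : unitrig_mx U0).
Hypothesis L0P_P'U0 : L0 *m P = P' *m U0.

Lemma exists_id_cols_mul i : (i <= m)%N ->
  exists L U, [/\ unitrig_mx L, unitrig_mx U,
    forall x c : 'I_m, (c < i)%N -> L x c = (x == c)%:R & L *m P = P' *m U].
Proof.
elim: i => [_ | i IH lt_im]; first by exists L0, U0.
have [L [U [trigL trigU Lid LP_P'U]]] := IH (ltnW lt_im).
pose a := Ordinal lt_im.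
have La : row a L = delta_mx 0 a by apply: row_unitrig_id_cols.
have [U' [trigU' E']] := exists_reduced_mul PP PP' trigU La LP_P'U.
exists (set_unit_col L a), U'; split => //; first exact: unitrig_set_unit_col.
move=> x c; rewrite ltnS leq_eqVlt mxE => /orP[/eqP c_i | lt_ci].
  have -> : c = a by apply: val_inj.
  by rewrite eqxx.
by rewrite -val_eqE /= (ltn_eqF lt_ci) Lid.
Qed.

Lemma unitrig_equiv_partial_perm_mx_eq : P = P'.
Proof.
apply/row_matrixP => a.
have [L [U [trigL trigU Lid LP_P'U]]] := exists_id_cols_mul (ltnW (ltn_ord a)).
exact: row_eq_at_unit_row PP PP' trigU (row_unitrig_id_cols trigL Lid) LP_P'U.
Qed.

End Uniqueness.

End PartialPermutationMatrices.

Lemma lower_unitri_unitrig n (L : 'M[F2]_n) : lower_unitri L -> unitrig_mx L.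
Proof.
case=> c ->.
have -> : \sum_(i < n) \sum_(j < n | (j < i)%N) c i j *: delta_mx i j =
          \matrix_(i, j) (if (j < i)%N then c i j else 0).
  rewrite [RHS]matrix_sum_delta; apply: eq_bigr => i _.
  by rewrite big_mkcond; apply: eq_bigr => j _; rewrite mxE; case: ifP; rewrite ?scale0r.
split => [|i]; last by rewrite !mxE eqxx ltnn addr0.
apply/is_trig_mxP => i j lt_ij.
by rewrite !mxE -val_eqE (ltn_eqF lt_ij) ltnNge (ltnW lt_ij) addr0.
Qed.

Lemma trmx_Pi m n r (alpha : 'I_r -> 'I_m) (beta : 'I_r -> 'I_n) :
  (Pi alpha beta)^T = Pi beta alpha.
Proof. by rewrite /Pi linear_sum; apply: eq_bigr => k _; apply: trmx_delta. Qed.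

Lemma unit_rows_Pi m n r (alpha : 'I_r -> 'I_m) (beta : 'I_r -> 'I_n) :
  injective alpha -> unit_rows (Pi alpha beta).
Proof.
move=> inj_alpha a; case: (pickP (fun k => alpha k == a)) => [k /eqP <- | alpha_na].
  right; exists (beta k); apply/rowP => j; rewrite !mxE summxE (bigD1 k) //=.
  rewrite big1 => [|k' nk]; first by rewrite mxE !eqxx addr0.
  by rewrite mxE (inj_eq inj_alpha) eq_sym (negbTE nk).
left; apply/rowP => j; rewrite !mxE summxE big1 // => k _.
by rewrite mxE eq_sym alpha_na.
Qed.

Lemma Pi_partial_perm m n r (alpha : 'I_r -> 'I_m) (beta : 'I_r -> 'I_n) :
  injective alpha -> injective beta -> partial_perm_mx (Pi alpha beta).
Proof. by move=> ? ?; split; rewrite ?trmx_Pi; apply: unit_rows_Pi. Qed.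

Lemma increasing_inj r m (f : 'I_r -> 'I_m) : increasing f -> injective f.
Proof.
move=> incr_f i j fij; apply/val_inj.
by case: (ltngtP i j) => // /incr_f; rewrite fij ltnn.
Qed.

Theorem lemma4 (m n r r' : nat)
  (alpha : 'I_r -> 'I_m) (alpha' : 'I_r' -> 'I_m)
  (beta : 'I_r -> 'I_n) (beta' : 'I_r' -> 'I_n) :
  increasing alpha -> increasing alpha' ->
  injective beta -> injective beta' ->
  (exists (L : 'M[F2]_m) (R : 'M[F2]_n),
     lower_unitri L /\ lower_unitri R /\
     L *m Pi alpha beta = Pi alpha' beta' *m R) ->
  Pi alpha beta = Pi alpha' beta'.
Proof.
move=> incr_alpha incr_alpha' inj_beta inj_beta' [L [R [lowL [lowR E]]]].
apply: unitrig_equiv_partial_perm_mx_eq E.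
- exact: Pi_partial_perm (increasing_inj incr_alpha) inj_beta.
- exact: Pi_partial_perm (increasing_inj incr_alpha') inj_beta'.
- exact: lower_unitri_unitrig.
- exact: lower_unitri_unitrig.
Qed.
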